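(* Let $0<|q|<1$ and let $a,b$ be complex numbers with $aq^j\neq1$ for all integers $j\ge0$. Then \[ \frac{(-bq;q)_\infty\,(abq;q)_\infty}{(-q;q)_\infty\,(a;q)_\infty}=\sum_{k=0}^\infty\frac{(b;q)_k}{(q;q)_k}\,\frac{(ab^2q^{2+k};q^2)_\infty}{(aq^k;q^2)_\infty}\,(-1)^kq^k . \]
   Context: For $0<|q|<1$ and base $p\in\{q,q^2\}$: $(x;p)_\infty=\prod_{j\ge0}(1-xp^j)$ and $(x;p)_k=(x;p)_\infty/(xp^k;p)_\infty$. *)

From Stdlib Require Import Reals.
From Coquelicot Require Import Coquelicot.
Open Scope C_scope.

Fixpoint qpoch (x p : C) (k : nat) : C :=
  match k with
  | O => 1
  | S k' => qpoch x p k' * (1 - x * p ^ k')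
  end.

Definition qpoch_inf (x p : C) : C :=
  @lim (CompleteNormedModule.CompleteSpace _ C_CompleteNormedModule) (filtermap (qpoch x p) eventually).

(* Put F(x) = sum_k c_k rho_x(k), with c_k = (b;q)_k/(q;q)_k (-q)^k and
   rho_x(k) = (x b^2 q^(2+k);q^2)_oo / (x q^k;q^2)_oo, so that the series of the
   theorem is F(a).  Summation by parts, using the first-order recurrence of c_k and
   the recurrence of rho_x under k -> k+2, gives the q-difference equation
     (1-x) F(x) + x q (b-1) F(xq) - (1 - x b q^2) F(xq^2) = 0.
   Hence D(x) = (1-x) F(x) - (1 - bqx) F(xq) satisfies D(xq) = -D(x), so |D(xq^N)|
   is constant; as rho_{xq^N} -> 1 uniformly, F(xq^N) -> sum_k c_k and D(xq^N) -> 0.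
   Thus D = 0, and iterating (1-x) F(x) = (1-bqx) F(xq) gives
   (x;q)_oo F(x) = (bqx;q)_oo sum_k c_k.  Finally sum_k c_k = (-bq;q)_oo/(-q;q)_oo
   by the q-binomial theorem, proved by the same iteration. *)

From Stdlib Require Import Reals Lra Lia FunctionalExtensionality.
From Coquelicot Require Import Coquelicot.
Open Scope C_scope.

Lemma Cmod_le_add_sub x y : (Cmod x <= Cmod y + Cmod (x - y))%R.
Proof. replace x with (y + (x - y)) at 1 by ring. apply Cmod_triangle. Qed.

Lemma Csub_0_r x : x - 0 = x.
Proof. ring. Qed.

Lemma Cmod_sub_le x y z : (Cmod (x - z) <= Cmod (x - y) + Cmod (y - z))%R.
Proof. replace (x - z) with ((x - y) + (y - z)) by ring. apply Cmod_triangle. Qed.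

Lemma Cmod_sub_sym x y : Cmod (x - y) = Cmod (y - x).
Proof. replace (x - y) with (- (y - x)) by ring. apply Cmod_opp. Qed.

Lemma Cmod_neq1 y : (Cmod y < 1)%R -> y <> 1.
Proof. intros H E. rewrite E, Cmod_1 in H. lra. Qed.

Lemma Csub_neq0 x y : x <> y -> x - y <> 0.
Proof. intros H E. apply H. apply Ceq_minus. exact E. Qed.

Lemma pow_le1 r n : (0 <= r <= 1)%R -> (r ^ n <= 1)%R.
Proof. intros Hr. rewrite <- (pow1 n). apply pow_incr. exact Hr. Qed.

Lemma pow_lt_eventually (r c d : R) : (0 <= r < 1)%R -> (0 < d)%R ->
  exists N, forall n, (N <= n)%nat -> (c * r ^ n < d)%R.
Proof.
  intros Hr Hd.
  destruct (pow_lt_1_zero r ltac:(rewrite Rabs_right; lra) (d / (Rabs c + 1))%R) as [N HN].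
  { apply Rdiv_lt_0_compat; [lra|]. pose proof (Rabs_pos c). lra. }
  exists N. intros n Hn. specialize (HN n Hn).
  assert (Hrn : (0 <= r ^ n)%R) by (apply pow_le; lra).
  rewrite Rabs_right in HN by lra.
  pose proof (Rabs_pos c). pose proof (Rle_abs c).
  apply Rle_lt_trans with ((Rabs c + 1) * r ^ n)%R; [nra|].
  replace d with ((Rabs c + 1) * (d / (Rabs c + 1)))%R by (field; lra).
  apply Rmult_lt_compat_l; lra.
Qed.

Lemma Cmod_mul_pow_lt_eventually (x q : C) (d : R) : (Cmod q < 1)%R -> (0 < d)%R ->
  exists N, forall n, (N <= n)%nat -> (Cmod (x * q ^ n) < d)%R.
Proof.
  intros Hq Hd. destruct (pow_lt_eventually (Cmod q) (Cmod x) d) as [N HN]; auto.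
  { split; [apply Cmod_ge_0 | exact Hq]. }
  exists N. intros n Hn. rewrite Cmod_mult, Cmod_pow. auto.
Qed.

(** * Convergence of complex sequences *)

Definition Ccv (u : nat -> C) (l : C) : Prop :=
  forall eps : R, (0 < eps)%R ->
  exists N : nat, forall n : nat, (N <= n)%nat -> (Cmod (u n - l) < eps)%R.

Lemma Ccv_filterlim u l : Ccv u l <-> filterlim u eventually (locally l).
Proof.
  rewrite (filterlim_locally_ball_norm (K := C_AbsRing) (U := C_NormedModule)).
  split.
  - intros H eps. exact (H eps (cond_pos eps)).
  - intros H eps Heps. exact (H (mkposreal eps Heps)).
Qed.

Lemma Ccv_ext u v l : (forall n, u n = v n) -> Ccv u l -> Ccv v l.
Proof.
  intros E H eps He. destruct (H eps He) as [N HN]. exists N. intros n Hn. rewrite <- E. auto.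
Qed.

Lemma Ccv_shift u l k : Ccv u l -> Ccv (fun n => u (n + k)%nat) l.
Proof.
  intros H eps He. destruct (H eps He) as [N HN]. exists N. intros n Hn. apply HN. lia.
Qed.

Lemma Ccv_const c : Ccv (fun _ => c) c.
Proof.
  intros eps He. exists O. intros n _. replace (c - c) with (RtoC 0) by ring. rewrite Cmod_0. lra.
Qed.

Lemma Ccv_unique u l m : Ccv u l -> Ccv u m -> l = m.
Proof.
  rewrite !Ccv_filterlim. apply (filterlim_locally_unique (K := C_AbsRing) (V := C_NormedModule)).
Qed.

Lemma Ccv_plus u v l m : Ccv u l -> Ccv v m -> Ccv (fun n => u n + v n) (l + m).
Proof.
  rewrite !Ccv_filterlim. intros Hu Hv.
  exact (filterlim_comp_2 u v (@plus C_NormedModule) Hu Hv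
           (filterlim_plus (K := C_AbsRing) (V := C_NormedModule) l m)).
Qed.

Lemma Ccv_Cmod_le u l c B N0 : Ccv u l ->
  (forall n, (N0 <= n)%nat -> (Cmod (u n - c) <= B)%R) -> (Cmod (l - c) <= B)%R.
Proof.
  intros H Hb. apply Rnot_lt_le. intros Hlt.
  destruct (H (Cmod (l - c) - B)%R ltac:(lra)) as [N HN].
  specialize (HN (max N N0) ltac:(lia)). specialize (Hb (max N N0) ltac:(lia)).
  pose proof (Cmod_sub_le l (u (max N N0)) c). rewrite Cmod_sub_sym in HN. lra.
Qed.

Lemma bounded_of_eventually (f : nat -> R) N B :
  (forall n, (N <= n)%nat -> (f n <= B)%R) -> exists B', forall n, (f n <= B')%R.
Proof.
  revert B. induction N as [|N IH]; intros B H.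
  - exists B. intros n. apply H. lia.
  - apply (IH (Rmax B (f N))). intros n Hn. destruct (Nat.eq_dec n N) as [->|].
    + apply Rmax_r.
    + eapply Rle_trans; [apply H; lia | apply Rmax_l].
Qed.

Lemma Ccv_bounded u l : Ccv u l -> exists K, forall n, (Cmod (u n) <= K)%R.
Proof.
  intros H. destruct (H 1%R Rlt_0_1) as [N HN].
  apply (bounded_of_eventually _ N (Cmod l + 1)). intros n Hn.
  pose proof (Cmod_le_add_sub (u n) l). pose proof (HN n Hn). lra.
Qed.

Lemma Ccv_mult u v l m : Ccv u l -> Ccv v m -> Ccv (fun n => u n * v n) (l * m).
Proof.
  intros Hu Hv eps He.
  destruct (Ccv_bounded v m Hv) as [K HK].
  assert (HK0 : (0 <= K)%R) by (eapply Rle_trans; [apply Cmod_ge_0 | apply (HK O)]).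
  assert (Hl := Cmod_ge_0 l).
  destruct (Hu (eps / (3 * (K + 1)))%R) as [N1 H1]; [apply Rdiv_lt_0_compat; lra|].
  destruct (Hv (eps / (3 * (Cmod l + 1)))%R) as [N2 H2]; [apply Rdiv_lt_0_compat; lra|].
  exists (max N1 N2). intros n Hn.
  specialize (H1 n ltac:(lia)). specialize (H2 n ltac:(lia)). specialize (HK n).
  replace (u n * v n - l * m) with ((u n - l) * v n + l * (v n - m)) by ring.
  eapply Rle_lt_trans; [apply Cmod_triangle|]. rewrite !Cmod_mult.
  assert (A1 : (Cmod (u n - l) * Cmod (v n) <= eps / (3 * (K + 1)) * (K + 1))%R)
    by (apply Rmult_le_compat; try apply Cmod_ge_0; lra).
  assert (A2 : (Cmod l * Cmod (v n - m) <= (Cmod l + 1) * (eps / (3 * (Cmod l + 1))))%R)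
    by (apply Rmult_le_compat; try apply Cmod_ge_0; lra).
  replace (eps / (3 * (K + 1)) * (K + 1))%R with (eps / 3)%R in A1 by (field; lra).
  replace ((Cmod l + 1) * (eps / (3 * (Cmod l + 1))))%R with (eps / 3)%R in A2 by (field; lra).
  lra.
Qed.

Lemma Ccv_scal c u l : Ccv u l -> Ccv (fun n => c * u n) (c * l).
Proof. apply Ccv_mult, Ccv_const. Qed.

Lemma Ccv_minus u v l m : Ccv u l -> Ccv v m -> Ccv (fun n => u n - v n) (l - m).
Proof.
  intros Hu Hv. apply (Ccv_ext (fun n => u n + (-1) * v n)); [intros; ring|].
  replace (l - m) with (l + (-1) * m) by ring. apply Ccv_plus, Ccv_scal; assumption.
Qed.

Lemma Ccv_Cmod_ge u l : Ccv u l -> l <> 0 ->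
  exists N, forall n, (N <= n)%nat -> (Cmod l / 2 <= Cmod (u n))%R.
Proof.
  intros H Hl. destruct (H (Cmod l / 2)%R) as [N HN].
  { apply Rdiv_lt_0_compat; [apply Cmod_gt_0; exact Hl | lra]. }
  exists N. intros n Hn. pose proof (Cmod_le_add_sub l (u n)).
  rewrite Cmod_sub_sym in H0. pose proof (HN n Hn). lra.
Qed.

Lemma Ccv_inv u l : Ccv u l -> l <> 0 -> Ccv (fun n => / u n) (/ l).
Proof.
  intros H Hl eps He.
  assert (Hl0 := proj1 (Cmod_gt_0 l) Hl).
  destruct (Ccv_Cmod_ge u l H Hl) as [N1 H1].
  destruct (H (eps * (Cmod l * Cmod l) / 2)%R) as [N2 H2].
  { apply Rdiv_lt_0_compat; [apply Rmult_lt_0_compat; [|apply Rmult_lt_0_compat]|]; lra. }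
  exists (max N1 N2). intros n Hn.
  specialize (H1 n ltac:(lia)). specialize (H2 n ltac:(lia)).
  assert (Hu : u n <> 0) by (intros E; rewrite E, Cmod_0 in H1; lra).
  replace (/ u n - / l) with ((l - u n) / (u n * l)) by (field; split; assumption).
  rewrite Cmod_div, Cmod_mult, Cmod_sub_sym by (apply Cmult_neq_0; assumption).
  apply Rmult_lt_reg_r with (Cmod (u n) * Cmod l)%R; [apply Rmult_lt_0_compat; lra|].
  unfold Rdiv. rewrite Rmult_assoc, Rinv_l, Rmult_1_r by (apply Rgt_not_eq, Rmult_lt_0_compat; lra).
  apply Rlt_le_trans with (eps * (Cmod l * Cmod l) / 2)%R; [exact H2|].
  assert (0 < eps * Cmod l)%R by (apply Rmult_lt_0_compat; lra).
  nra.
Qed.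

Lemma Ccv_div u v l m : Ccv u l -> Ccv v m -> m <> 0 -> Ccv (fun n => u n / v n) (l / m).
Proof. intros Hu Hv Hm. apply Ccv_mult; [exact Hu | apply Ccv_inv; assumption]. Qed.

Lemma Ccv_geom_bound u l M r : (0 <= r < 1)%R ->
  (forall n, (Cmod (u n - l) <= M * r ^ n)%R) -> Ccv u l.
Proof.
  intros Hr Hu eps He. destruct (pow_lt_eventually r M eps Hr He) as [N HN].
  exists N. intros n Hn. eapply Rle_lt_trans; [apply Hu | auto].
Qed.

Lemma Cmod_const_of_Ccv0 u c : Ccv u 0 -> (forall n, Cmod (u n) = c) -> c = 0%R.
Proof.
  intros H E. assert (Hc : (0 <= c)%R) by (rewrite <- (E O); apply Cmod_ge_0).
  apply Rle_antisym; [|lra]. apply Rnot_lt_le. intros Hc'.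
  destruct (H c Hc') as [N HN]. specialize (HN N (le_n _)).
  rewrite Csub_0_r, E in HN. lra.
Qed.

Definition Clim (u : nat -> C) : C :=
  @lim (CompleteNormedModule.CompleteSpace _ C_CompleteNormedModule) (filtermap u eventually).

Lemma Clim_ext u v : (forall n, u n = v n) -> Clim u = Clim v.
Proof. intros E. unfold Clim. do 2 f_equal. apply functional_extensionality, E. Qed.

Lemma Ccv_Clim_of_cauchy (u : nat -> C) :
  (forall eps : R, (0 < eps)%R -> exists N, forall n m, (N <= n)%nat -> (N <= m)%nat ->
     (Cmod (u n - u m) < eps)%R) ->
  Ccv u (Clim u).
Proof.
  intros H.
  assert (HP : ProperFilter (filtermap u eventually))
    by (apply filtermap_proper_filter, eventually_filter).
  assert (HC : cauchy (filtermap u eventually)).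
  { intros eps. destruct (H eps (cond_pos eps)) as [N HN].
    exists (u N), N. intros n Hn. apply C_NormedModule_mixin_compat1, HN; lia. }
  pose proof (complete_cauchy (T := CompleteNormedModule.CompleteSpace _ C_CompleteNormedModule)
                _ HP HC) as K.
  intros eps He. destruct (K (mkposreal (eps / 2) ltac:(lra))) as [N HN].
  exists N. intros n Hn. specialize (HN n Hn).
  (* The balls of the uniform structure of [C] are within a factor [sqrt 2] of [Cmod]-balls. *)
  apply C_NormedModule_mixin_compat2 in HN. simpl in HN. unfold minus in HN. simpl in HN.
  assert (sqrt 2 < 2)%R by (pose proof (sqrt_sqrt 2 ltac:(lra)); pose proof (sqrt_pos 2); nra).
  eapply Rlt_le_trans; [exact HN|]. pose proof (sqrt_pos 2). nra.
Qed.

(** * q-Pochhammer symbols *)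

Lemma qpoch_add x p n m : qpoch x p (n + m) = qpoch x p n * qpoch (x * p ^ n) p m.
Proof.
  induction m as [|m IH].
  - rewrite Nat.add_0_r. simpl. ring.
  - rewrite Nat.add_succ_r. simpl. rewrite IH, Cpow_add_r. ring.
Qed.

Lemma qpoch_neq0 x p n : (forall j, (j < n)%nat -> x * p ^ j <> 1) -> qpoch x p n <> 0.
Proof.
  induction n as [|n IH]; intros H; simpl.
  - apply C1_nz.
  - apply Cmult_neq_0; [apply IH; intros; apply H; lia|].
    intros E. apply (H n (Nat.lt_succ_diag_r n)). symmetry. apply Ceq_minus. exact E.
Qed.

Definition qpoch_dev (r t : R) : R := (exp (t / (1 - r)) - 1)%R.

Lemma qpoch_dev_ge0 r t : (r < 1)%R -> (0 <= t)%R -> (0 <= qpoch_dev r t)%R.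
Proof.
  intros Hr Ht. unfold qpoch_dev.
  assert (0 <= t / (1 - r))%R by (apply Rdiv_le_0_compat; lra).
  pose proof (exp_ineq1_le (t / (1 - r))). lra.
Qed.

Lemma qpoch_dev_small r eps : (r < 1)%R -> (0 < eps)%R ->
  exists d, (0 < d)%R /\ forall t, (0 <= t < d)%R -> (qpoch_dev r t < eps)%R.
Proof.
  intros Hr He. exists ((1 - r) * ln (1 + eps))%R. split.
  - apply Rmult_lt_0_compat; [lra|]. rewrite <- ln_1. apply ln_increasing; lra.
  - intros t Ht. unfold qpoch_dev.
    assert (t / (1 - r) < ln (1 + eps))%R.
    { apply (Rmult_lt_reg_l (1 - r)); [lra|].
      replace ((1 - r) * (t / (1 - r)))%R with t by (field; lra). lra. }
    apply exp_increasing in H. rewrite exp_ln in H by lra. lra.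
Qed.

Lemma Cmod_qpoch_sub1_le_exp y p m : (Cmod p < 1)%R ->
  (Cmod (qpoch y p m - 1) <= exp (Cmod y * (1 - Cmod p ^ m) / (1 - Cmod p)) - 1)%R.
Proof.
  intros Hp. induction m as [|m IH].
  - simpl. replace (1 - 1) with (RtoC 0) by ring. rewrite Cmod_0.
    replace (Cmod y * (1 - 1) / (1 - Cmod p))%R with 0%R by (field; lra). rewrite exp_0. lra.
  - simpl qpoch. set (Q := qpoch y p m) in *.
    set (s := (Cmod y * (1 - Cmod p ^ m) / (1 - Cmod p))%R) in *.
    set (t := (Cmod y * Cmod p ^ m)%R).
    replace (Q * (1 - y * p ^ m) - 1) with ((Q - 1) + - (y * p ^ m) * Q) by ring.
    eapply Rle_trans; [apply Cmod_triangle|]. rewrite Cmod_mult, Cmod_opp, Cmod_mult, Cmod_pow.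
    fold t.
    assert (HQ : (Cmod Q <= exp s)%R)
      by (pose proof (Cmod_le_add_sub Q 1); rewrite Cmod_1 in H; lra).
    assert (Ht : (0 <= t)%R) by (apply Rmult_le_pos; [apply Cmod_ge_0 | apply pow_le, Cmod_ge_0]).
    replace (Cmod y * (1 - Cmod p ^ S m) / (1 - Cmod p))%R with (s + t)%R
      by (unfold s, t; simpl; field; lra).
    rewrite exp_plus.
    assert (exp s * (1 + t) <= exp s * exp t)%R
      by (apply Rmult_le_compat_l; [left; apply exp_pos | apply exp_ineq1_le]).
    assert (t * Cmod Q <= t * exp s)%R by (apply Rmult_le_compat_l; lra).
    nra.
Qed.

Lemma Cmod_qpoch_sub1_le y p m : (Cmod p < 1)%R ->
  (Cmod (qpoch y p m - 1) <= qpoch_dev (Cmod p) (Cmod y))%R.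
Proof.
  intros Hp. eapply Rle_trans; [apply Cmod_qpoch_sub1_le_exp; exact Hp|]. unfold qpoch_dev.
  apply Rplus_le_compat_r.
  enough (E : (Cmod y * (1 - Cmod p ^ m) / (1 - Cmod p) <= Cmod y / (1 - Cmod p))%R).
  { destruct E as [E | ->]; [left; apply exp_increasing, E | right; reflexivity]. }
  unfold Rdiv. apply Rmult_le_compat_r; [left; apply Rinv_0_lt_compat; lra|].
  pose proof (pow_le (Cmod p) m (Cmod_ge_0 p)). pose proof (Cmod_ge_0 y). nra.
Qed.

Lemma Cmod_qpoch_tail_le x p N n : (Cmod p < 1)%R -> (N <= n)%nat ->
  (Cmod (qpoch x p n - qpoch x p N)
   <= (1 + qpoch_dev (Cmod p) (Cmod x)) * qpoch_dev (Cmod p) (Cmod (x * p ^ N)))%R.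
Proof.
  intros Hp Hn. destruct (Nat.le_exists_sub N n Hn) as [k [-> _]].
  rewrite Nat.add_comm, qpoch_add.
  replace (qpoch x p N * qpoch (x * p ^ N) p k - qpoch x p N)
    with (qpoch x p N * (qpoch (x * p ^ N) p k - 1)) by ring.
  rewrite Cmod_mult. apply Rmult_le_compat; try apply Cmod_ge_0.
  - pose proof (Cmod_le_add_sub (qpoch x p N) 1). rewrite Cmod_1 in H.
    pose proof (Cmod_qpoch_sub1_le x p N Hp). lra.
  - apply Cmod_qpoch_sub1_le, Hp.
Qed.

Lemma qpoch_cv x p : (Cmod p < 1)%R -> Ccv (qpoch x p) (qpoch_inf x p).
Proof.
  intros Hp. apply Ccv_Clim_of_cauchy. intros eps He.
  set (M := (1 + qpoch_dev (Cmod p) (Cmod x))%R).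
  assert (HM : (1 <= M)%R)
    by (unfold M; pose proof (qpoch_dev_ge0 (Cmod p) (Cmod x) Hp (Cmod_ge_0 x)); lra).
  destruct (qpoch_dev_small (Cmod p) (eps / (2 * M)) Hp) as [d [Hd Hdev]].
  { apply Rdiv_lt_0_compat; lra. }
  destruct (Cmod_mul_pow_lt_eventually x p d Hp Hd) as [N HN].
  assert (tail : forall n, (N <= n)%nat -> (Cmod (qpoch x p n - qpoch x p N) < eps / 2)%R).
  { intros n Hn. eapply Rle_lt_trans; [apply Cmod_qpoch_tail_le; assumption|]. fold M.
    replace (eps / 2)%R with (M * (eps / (2 * M)))%R by (field; lra).
    apply Rmult_lt_compat_l; [lra|]. apply Hdev. split; [apply Cmod_ge_0 | apply HN, le_n]. }
  exists N. intros n m Hn Hm.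
  eapply Rle_lt_trans; [apply (Cmod_sub_le _ (qpoch x p N))|].
  rewrite (Cmod_sub_sym (qpoch x p N)). pose proof (tail n Hn). pose proof (tail m Hm). lra.
Qed.

Lemma Cmod_qpoch_inf_sub1_le y p : (Cmod p < 1)%R ->
  (Cmod (qpoch_inf y p - 1) <= qpoch_dev (Cmod p) (Cmod y))%R.
Proof.
  intros Hp. apply (Ccv_Cmod_le (qpoch y p) _ _ _ O (qpoch_cv y p Hp)).
  intros n _. apply Cmod_qpoch_sub1_le, Hp.
Qed.

Lemma qpoch_inf_split x p n : (Cmod p < 1)%R ->
  qpoch_inf x p = qpoch x p n * qpoch_inf (x * p ^ n) p.
Proof.
  intros Hp. apply (Ccv_unique (fun m => qpoch x p (m + n))).
  - apply Ccv_shift, qpoch_cv, Hp.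
  - apply (Ccv_ext (fun m => qpoch x p n * qpoch (x * p ^ n) p m)).
    { intros m. rewrite Nat.add_comm, qpoch_add. reflexivity. }
    apply Ccv_scal, qpoch_cv, Hp.
Qed.

Lemma qpoch_inf_S x p : (Cmod p < 1)%R -> qpoch_inf x p = (1 - x) * qpoch_inf (x * p) p.
Proof. intros Hp. rewrite (qpoch_inf_split x p 1 Hp). simpl. f_equal; [ring | f_equal; ring]. Qed.

Lemma qpoch_inf_mul_pow_cv1 x p r : (Cmod p < 1)%R -> (Cmod r < 1)%R ->
  Ccv (fun n => qpoch_inf (x * r ^ n) p) 1.
Proof.
  intros Hp Hr eps He.
  destruct (qpoch_dev_small (Cmod p) eps Hp He) as [d [Hd Hdev]].
  destruct (Cmod_mul_pow_lt_eventually x r d Hr Hd) as [N HN].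
  exists N. intros n Hn. eapply Rle_lt_trans; [apply Cmod_qpoch_inf_sub1_le; exact Hp|].
  apply Hdev. split; [apply Cmod_ge_0 | apply HN, Hn].
Qed.

Lemma qpoch_inf_neq0 x p : (Cmod p < 1)%R -> (forall j, x * p ^ j <> 1) -> qpoch_inf x p <> 0.
Proof.
  intros Hp Hx.
  destruct (qpoch_inf_mul_pow_cv1 x p p Hp Hp 1%R Rlt_0_1) as [N HN].
  rewrite (qpoch_inf_split x p N Hp). apply Cmult_neq_0.
  - apply qpoch_neq0. intros j _. apply Hx.
  - intros E. specialize (HN N (le_n N)). rewrite E in HN.
    replace (0 - 1) with (- (1)) in HN by ring. rewrite Cmod_opp, Cmod_1 in HN. lra.
Qed.

Lemma qdifference_solution (q beta : C) (P : C -> Prop) (F : C -> C) w s :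
  (Cmod q < 1)%R ->
  (forall x, P x -> P (x * q)) ->
  (forall x, P x -> (1 - x) * F x = (1 - beta * x) * F (x * q)) ->
  P w -> Ccv (fun N => F (w * q ^ N)) s ->
  qpoch_inf w q * F w = qpoch_inf (beta * w) q * s.
Proof.
  intros Hq HP HF Hw Hcv.
  assert (HPn : forall N, P (w * q ^ N)).
  { induction N as [|N IH]; [simpl; rewrite Cmult_1_r; exact Hw|].
    replace (w * q ^ S N) with (w * q ^ N * q) by (simpl; ring). auto. }
  assert (finite : forall N, qpoch w q N * F w = qpoch (beta * w) q N * F (w * q ^ N)).
  { induction N as [|N IH]; [simpl; rewrite Cmult_1_r; ring|].
    simpl. replace (w * (q * q ^ N)) with (w * q ^ N * q) by ring.
    transitivity ((qpoch w q N * F w) * (1 - w * q ^ N)); [ring|]. rewrite IH.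
    transitivity (qpoch (beta * w) q N * ((1 - w * q ^ N) * F (w * q ^ N))); [ring|].
    rewrite (HF _ (HPn N)). ring. }
  apply (Ccv_unique (fun N => qpoch w q N * F w)).
  - apply (Ccv_mult _ (fun _ => F w)); [apply qpoch_cv, Hq | apply Ccv_const].
  - apply (Ccv_ext (fun N => qpoch (beta * w) q N * F (w * q ^ N))); [intros; symmetry; auto|].
    apply Ccv_mult; [apply qpoch_cv, Hq | exact Hcv].
Qed.

(** * Series with geometrically bounded terms *)

Fixpoint psum (f : nat -> C) (n : nat) : C :=
  match n with O => 0 | S n => psum f n + f n end.

Lemma psum_ext f g n : (forall k, f k = g k) -> psum f n = psum g n.
Proof. intros E. induction n; simpl; congruence. Qed.

Lemma psum_sub f g n : psum f n - psum g n = psum (fun k => f k - g k) n.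
Proof. induction n as [|n IH]; simpl; [ring|]. rewrite <- IH. ring. Qed.

Lemma is_series_of_Ccv_psum f l : Ccv (psum f) l -> is_series f l.
Proof.
  intros H. apply Ccv_filterlim.
  apply (Ccv_ext (fun n => psum f (n + 1))); [|apply Ccv_shift, H].
  intros n. rewrite Nat.add_1_r. induction n as [|n IH].
  - rewrite sum_O. simpl. ring.
  - rewrite sum_Sn, <- IH. reflexivity.
Qed.

Section GeometricDomination.
Variables (f : nat -> C) (K r : R).
Hypothesis Hr : (0 <= r < 1)%R.
Hypothesis Hf : forall k, (Cmod (f k) <= K * r ^ k)%R.

Lemma Cmod_psum_tail_le n m : (n <= m)%nat ->
  (Cmod (psum f m - psum f n) <= K * r ^ n / (1 - r))%R.
Proof.
  intros Hnm. destruct (Nat.le_exists_sub n m Hnm) as [j [-> _]]. clear Hnm. rewrite Nat.add_comm.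
  assert (HK : (0 <= K)%R) by (specialize (Hf O); simpl in Hf; pose proof (Cmod_ge_0 (f O)); lra).
  assert (telescoped : (Cmod (psum f (n + j) - psum f n) <= K * (r ^ n - r ^ (n + j)) / (1 - r))%R).
  { induction j as [|j IH].
    - rewrite Nat.add_0_r. replace (psum f n - psum f n) with (RtoC 0) by ring.
      rewrite Cmod_0. replace (K * (r ^ n - r ^ n) / (1 - r))%R with 0%R by (field; lra). lra.
    - rewrite Nat.add_succ_r. simpl psum.
      replace (psum f (n + j) + f (n + j)%nat - psum f n)
        with ((psum f (n + j) - psum f n) + f (n + j)%nat) by ring.
      eapply Rle_trans; [apply Cmod_triangle|].
      replace (K * (r ^ n - r ^ S (n + j)) / (1 - r))%R
        with (K * (r ^ n - r ^ (n + j)) / (1 - r) + K * r ^ (n + j))%R by (simpl; field; lra).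
      pose proof (Hf (n + j)%nat). lra. }
  eapply Rle_trans; [exact telescoped|]. unfold Rdiv.
  apply Rmult_le_compat_r; [left; apply Rinv_0_lt_compat; lra|].
  pose proof (pow_le r (n + j) (proj1 Hr)). nra.
Qed.

Lemma Cmod_psum_le m : (Cmod (psum f m) <= K / (1 - r))%R.
Proof.
  pose proof (Cmod_psum_tail_le O m (Nat.le_0_l m)) as H. simpl in H.
  rewrite Csub_0_r, Rmult_1_r in H. exact H.
Qed.

Lemma psum_cv : Ccv (psum f) (Clim (psum f)).
Proof.
  apply Ccv_Clim_of_cauchy. intros eps He.
  destruct (pow_lt_eventually r (2 * K / (1 - r)) eps Hr He) as [N HN].
  exists N. intros n m Hn Hm.
  eapply Rle_lt_trans; [apply (Cmod_sub_le _ (psum f N))|].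
  rewrite (Cmod_sub_sym (psum f N)).
  pose proof (Cmod_psum_tail_le N n Hn). pose proof (Cmod_psum_tail_le N m Hm).
  specialize (HN N (le_n _)).
  replace (2 * K / (1 - r) * r ^ N)%R with (2 * (K * r ^ N / (1 - r)))%R in HN by (field; lra).
  lra.
Qed.

End GeometricDomination.

Lemma psum_mul_bounded_cv (c g : nat -> C) K r M : (0 <= r < 1)%R ->
  (forall k, (Cmod (c k) <= K * r ^ k)%R) -> (forall k, (Cmod (g k) <= M)%R) ->
  Ccv (psum (fun k => c k * g k)) (Clim (psum (fun k => c k * g k))).
Proof.
  intros Hr Hc Hg. apply (psum_cv _ (K * M) r Hr). intros k. rewrite Cmod_mult.
  replace (K * M * r ^ k)%R with (K * r ^ k * M)%R by ring.
  apply Rmult_le_compat; auto using Cmod_ge_0.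
Qed.

(* Dominated convergence for series with geometrically decaying coefficients. *)
Lemma Clim_psum_shift_cv (c g : nat -> C) K r : (0 <= r < 1)%R ->
  (forall k, (Cmod (c k) <= K * r ^ k)%R) -> Ccv g 1 ->
  Ccv (fun N => Clim (psum (fun k => c k * g (k + N)%nat))) (Clim (psum c)).
Proof.
  intros Hr Hc Hg eps He.
  assert (HK : (0 <= K)%R) by (specialize (Hc O); simpl in Hc; pose proof (Cmod_ge_0 (c O)); lra).
  destruct (Ccv_bounded g 1 Hg) as [M HM].
  set (eta := (eps * (1 - r) / (2 * (K + 1)))%R).
  assert (Heta : (0 < eta)%R)
    by (apply Rdiv_lt_0_compat; [apply Rmult_lt_0_compat|]; lra).
  destruct (Hg eta Heta) as [N0 HN0].
  exists N0. intros N HN.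
  apply Rle_lt_trans with (K * eta / (1 - r))%R.
  - rewrite <- (Csub_0_r (Clim _ - Clim _)).
    apply (Ccv_Cmod_le (fun m => psum (fun k => c k * g (k + N)%nat) m - psum c m) _ _ _ O).
    + apply Ccv_minus; [|apply (psum_cv c K r Hr Hc)].
      apply (psum_mul_bounded_cv c (fun k => g (k + N)%nat) K r M Hr Hc). auto.
    + intros m _. rewrite Csub_0_r, psum_sub.
      apply (Cmod_psum_le _ (K * eta) r Hr). intros k.
      replace (c k * g (k + N)%nat - c k) with (c k * (g (k + N)%nat - 1)) by ring.
      rewrite Cmod_mult. replace (K * eta * r ^ k)%R with (K * r ^ k * eta)%R by ring.
      apply Rmult_le_compat; auto using Cmod_ge_0. left. apply HN0. lia.
  - unfold eta.
    replace (K * (eps * (1 - r) / (2 * (K + 1))) / (1 - r))%R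
      with (eps / 2 * (K / (K + 1)))%R by (field; lra).
    assert (K / (K + 1) < 1)%R.
    { apply (Rmult_lt_reg_r (K + 1)); [lra|]. unfold Rdiv.
      rewrite Rmult_assoc, Rinv_l by lra. lra. }
    assert (0 <= K / (K + 1))%R by (apply Rdiv_le_0_compat; lra). nra.
Qed.

(** * The q-binomial theorem *)

Section QBinomial.
Variables q b : C.
Hypothesis Hq : (Cmod q < 1)%R.

Lemma qpow_S_neq1 j : q * q ^ j <> 1.
Proof.
  apply Cmod_neq1. rewrite Cmod_mult, Cmod_pow, tech_pow_Rmult.
  apply pow_lt_1_compat; [split; [apply Cmod_ge_0 | exact Hq] | lia].
Qed.

Lemma qpoch_qq_neq0 k : qpoch q q k <> 0.
Proof. apply qpoch_neq0. intros j _. apply qpow_S_neq1. Qed.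

Definition qbin_coef k := qpoch b q k / qpoch q q k.

Lemma qbin_coef_0 : qbin_coef 0 = 1.
Proof. unfold qbin_coef. simpl. field. Qed.

Lemma qbin_coef_S k : qbin_coef (S k) * (1 - q * q ^ k) = qbin_coef k * (1 - b * q ^ k).
Proof.
  unfold qbin_coef. simpl. field.
  split; [apply qpoch_qq_neq0 | apply Csub_neq0; intros E; apply (qpow_S_neq1 k); auto].
Qed.

Lemma qbin_coef_bounded : exists K, forall k, (Cmod (qbin_coef k) <= K)%R.
Proof.
  apply (Ccv_bounded _ (qpoch_inf b q / qpoch_inf q q)).
  apply Ccv_div; try apply qpoch_cv, Hq.
  apply qpoch_inf_neq0; [exact Hq | exact qpow_S_neq1].
Qed.

Definition qbin_series w := Clim (psum (fun k => qbin_coef k * w ^ k)).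

Lemma qbin_term_le K w : (forall k, (Cmod (qbin_coef k) <= K)%R) ->
  forall k, (Cmod (qbin_coef k * w ^ k) <= K * Cmod w ^ k)%R.
Proof.
  intros HK k. rewrite Cmod_mult, Cmod_pow.
  apply Rmult_le_compat_r; [apply pow_le, Cmod_ge_0 | apply HK].
Qed.

Lemma qbin_series_cv w : (Cmod w < 1)%R ->
  Ccv (psum (fun k => qbin_coef k * w ^ k)) (qbin_series w).
Proof.
  intros Hw. destruct qbin_coef_bounded as [K HK].
  apply (psum_cv _ K (Cmod w)); [split; [apply Cmod_ge_0 | exact Hw] | apply qbin_term_le, HK].
Qed.

Lemma psum_qbin_qdiff w n :
  psum (fun k => qbin_coef k * w ^ k) (S n) - psum (fun k => qbin_coef k * (w * q) ^ k) (S n)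
  = w * psum (fun k => qbin_coef k * w ^ k) n
    - b * w * psum (fun k => qbin_coef k * (w * q) ^ k) n.
Proof.
  induction n as [|n IH].
  - simpl. rewrite qbin_coef_0. ring.
  - transitivity ((psum (fun k => qbin_coef k * w ^ k) (S n)
                   - psum (fun k => qbin_coef k * (w * q) ^ k) (S n))
                  + qbin_coef (S n) * (1 - q * q ^ n) * (w * w ^ n)).
    { simpl. rewrite Cpow_mult_l. simpl. ring. }
    rewrite IH, qbin_coef_S. simpl. rewrite Cpow_mult_l. ring.
Qed.

Lemma qbin_series_qdiff w : (Cmod w < 1)%R ->
  (1 - w) * qbin_series w = (1 - b * w) * qbin_series (w * q).
Proof.
  intros Hw.
  assert (Hwq : (Cmod (w * q) < 1)%R).
  { rewrite Cmod_mult. pose proof (Cmod_ge_0 w). pose proof (Cmod_ge_0 q). nra. }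
  enough (E : qbin_series w - qbin_series (w * q)
              = w * qbin_series w - b * w * qbin_series (w * q))
    by (apply Ceq_minus; apply Ceq_minus in E; rewrite <- E; ring).
  apply (Ccv_unique (fun n => psum (fun k => qbin_coef k * w ^ k) (n + 1)
                              - psum (fun k => qbin_coef k * (w * q) ^ k) (n + 1))).
  - apply Ccv_minus; apply Ccv_shift, qbin_series_cv; assumption.
  - apply (Ccv_ext (fun n => w * psum (fun k => qbin_coef k * w ^ k) n
                             - b * w * psum (fun k => qbin_coef k * (w * q) ^ k) n)).
    { intros n. rewrite Nat.add_1_r. symmetry. apply psum_qbin_qdiff. }
    apply Ccv_minus; apply Ccv_scal, qbin_series_cv; assumption.
Qed.

Lemma Cmod_qbin_series_sub1_le K w :
  (forall k, (Cmod (qbin_coef k) <= K)%R) -> (Cmod w < 1)%R ->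
  (Cmod (qbin_series w - 1) <= K * Cmod w / (1 - Cmod w))%R.
Proof.
  intros HK Hw. assert (Hr : (0 <= Cmod w < 1)%R) by (split; [apply Cmod_ge_0 | exact Hw]).
  apply (Ccv_Cmod_le _ _ _ _ 1 (qbin_series_cv w Hw)). intros n Hn.
  pose proof (Cmod_psum_tail_le _ K (Cmod w) Hr (qbin_term_le K w HK) 1 n Hn) as H.
  simpl psum in H. rewrite qbin_coef_0, pow_1 in H.
  replace (0 + 1 * 1) with (RtoC 1) in H by ring. exact H.
Qed.

Lemma qbin_series_mul_qpow_cv1 w : (Cmod w < 1)%R -> Ccv (fun n => qbin_series (w * q ^ n)) 1.
Proof.
  intros Hw. destruct qbin_coef_bounded as [K HK].
  assert (HK0 : (0 <= K)%R) by (eapply Rle_trans; [apply Cmod_ge_0 | apply (HK O)]).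
  assert (Hr : (0 <= Cmod q < 1)%R) by (split; [apply Cmod_ge_0 | exact Hq]).
  apply (Ccv_geom_bound _ _ (K * Cmod w / (1 - Cmod w)) (Cmod q) Hr). intros n.
  assert (Hn : Cmod (w * q ^ n) = (Cmod w * Cmod q ^ n)%R)
    by (rewrite Cmod_mult, Cmod_pow; reflexivity).
  assert (Hn1 : (Cmod w * Cmod q ^ n <= Cmod w)%R).
  { pose proof (pow_le1 (Cmod q) n ltac:(lra)). pose proof (Cmod_ge_0 w). nra. }
  eapply Rle_trans; [apply Cmod_qbin_series_sub1_le; [exact HK | lra]|].
  rewrite Hn. pose proof (pow_le (Cmod q) n (proj1 Hr)). pose proof (Cmod_ge_0 w).
  replace (K * Cmod w / (1 - Cmod w) * Cmod q ^ n)%R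
    with (K * (Cmod w * Cmod q ^ n) * / (1 - Cmod w))%R by (field; lra).
  unfold Rdiv. apply Rmult_le_compat_l; [apply Rmult_le_pos; [lra | nra]|].
  apply Rinv_le_contravar; lra.
Qed.

Theorem q_binomial w : (Cmod w < 1)%R -> qpoch_inf w q * qbin_series w = qpoch_inf (b * w) q.
Proof.
  intros Hw. rewrite <- (Cmult_1_r (qpoch_inf (b * w) q)).
  apply (qdifference_solution q b (fun x => Cmod x < 1)%R qbin_series w 1 Hq).
  - intros x Hx. rewrite Cmod_mult. pose proof (Cmod_ge_0 x). pose proof (Cmod_ge_0 q). nra.
  - exact qbin_series_qdiff.
  - exact Hw.
  - apply qbin_series_mul_qpow_cv1, Hw.
Qed.

Lemma qpoch_inf_neg_q_neq0 : qpoch_inf (- q) q <> 0.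
Proof.
  apply qpoch_inf_neq0; [exact Hq|]. intros j. apply Cmod_neq1.
  rewrite Cmod_mult, Cmod_pow, Cmod_opp, tech_pow_Rmult.
  apply pow_lt_1_compat; [split; [apply Cmod_ge_0 | exact Hq] | lia].
Qed.

Lemma qbin_series_neg_q : qbin_series (- q) = qpoch_inf (- b * q) q / qpoch_inf (- q) q.
Proof.
  assert (Hmq : (Cmod (- q) < 1)%R) by (rewrite Cmod_opp; exact Hq).
  replace (- b * q) with (b * - q) by ring. rewrite <- (q_binomial (- q) Hmq).
  field. exact qpoch_inf_neg_q_neq0.
Qed.

End QBinomial.

(** * The series of the theorem as a function of a *)

Section SeriesF.
Variables q b : C.
Hypothesis Hq : (Cmod q < 1)%R.

Let Hr : (0 <= Cmod q < 1)%R := conj (Cmod_ge_0 q) Hq.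

Definition coef k := qbin_coef q b k * (- q) ^ k.

Definition ratio x k :=
  qpoch_inf (x * b ^ 2 * q ^ (2 + k)) (q ^ 2) / qpoch_inf (x * q ^ k) (q ^ 2).

Definition nonsingular x := forall j, x * q ^ j <> 1.

Definition F x := Clim (psum (fun k => coef k * ratio x k)).

Lemma Cmod_q2_lt1 : (Cmod (q ^ 2) < 1)%R.
Proof. rewrite Cmod_pow. pose proof (Cmod_ge_0 q). simpl. nra. Qed.

Lemma nonsingular_mul_qpow x N : nonsingular x -> nonsingular (x * q ^ N).
Proof. intros H j. rewrite <- Cmult_assoc, <- Cpow_add_r. apply H. Qed.

Lemma nonsingular_mul_q x : nonsingular x -> nonsingular (x * q).
Proof. intros H. rewrite <- (Cpow_1_r q). apply nonsingular_mul_qpow, H. Qed.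

Lemma ratio_den_neq0 x k : nonsingular x -> qpoch_inf (x * q ^ k) (q ^ 2) <> 0.
Proof.
  intros H. apply qpoch_inf_neq0; [exact Cmod_q2_lt1|]. intros j.
  rewrite <- Cpow_mult_r, <- Cmult_assoc, <- Cpow_add_r. apply H.
Qed.

Lemma ratio_S x k : ratio x (S k) = ratio (x * q) k.
Proof. unfold ratio. f_equal; f_equal; simpl; ring. Qed.

Lemma ratio_add x k N : ratio x (k + N) = ratio (x * q ^ N) k.
Proof.
  revert x k. induction N as [|N IH]; intros x k.
  - rewrite Nat.add_0_r, Cmult_1_r. reflexivity.
  - rewrite Nat.add_succ_r, <- Nat.add_succ_l, IH, ratio_S. f_equal. simpl. ring.
Qed.

Lemma ratio_qdiff x k : nonsingular x ->
  (1 - x * q ^ k) * ratio x k = (1 - x * b ^ 2 * q ^ (2 + k)) * ratio x (S (S k)).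
Proof.
  intros H. unfold ratio.
  rewrite (qpoch_inf_S (x * b ^ 2 * q ^ (2 + k)) (q ^ 2) Cmod_q2_lt1).
  rewrite (qpoch_inf_S (x * q ^ k) (q ^ 2) Cmod_q2_lt1).
  replace (x * b ^ 2 * q ^ (2 + k) * q ^ 2) with (x * b ^ 2 * q ^ (2 + S (S k)))
    by (simpl; ring).
  replace (x * q ^ k * q ^ 2) with (x * q ^ S (S k)) by (simpl; ring).
  field. split; [apply ratio_den_neq0, H | apply Csub_neq0; intros E; apply (H k); auto].
Qed.

Lemma ratio_cv1 x : Ccv (ratio x) 1.
Proof.
  replace (RtoC 1) with (1 / 1) by field.
  apply Ccv_div; [| | apply C1_nz].
  - apply (Ccv_ext (fun k => qpoch_inf (x * b ^ 2 * q ^ 2 * q ^ k) (q ^ 2))).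
    { intros k. f_equal. rewrite Cpow_add_r. ring. }
    apply qpoch_inf_mul_pow_cv1; [exact Cmod_q2_lt1 | exact Hq].
  - apply qpoch_inf_mul_pow_cv1; [exact Cmod_q2_lt1 | exact Hq].
Qed.

Lemma coef_S k : coef (S k) * (1 - q * q ^ k) = - q * (1 - b * q ^ k) * coef k.
Proof.
  unfold coef. transitivity (qbin_coef q b (S k) * (1 - q * q ^ k) * (- q) ^ S k); [ring|].
  rewrite qbin_coef_S by exact Hq. simpl. ring.
Qed.

Lemma coef_le : exists K, forall k, (Cmod (coef k) <= K * Cmod q ^ k)%R.
Proof.
  destruct (qbin_coef_bounded q b Hq) as [K HK]. exists K. intros k.
  rewrite <- (Cmod_opp q). apply qbin_term_le, HK.
Qed.

Lemma F_cv x : Ccv (psum (fun k => coef k * ratio x k)) (F x).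
Proof.
  destruct coef_le as [K HK]. destruct (Ccv_bounded _ _ (ratio_cv1 x)) as [M HM].
  exact (psum_mul_bounded_cv coef (ratio x) K (Cmod q) M Hr HK HM).
Qed.

Lemma F_mul_q_cv x : Ccv (psum (fun k => coef k * ratio x (S k))) (F (x * q)).
Proof.
  apply (Ccv_ext (psum (fun k => coef k * ratio (x * q) k))); [|apply F_cv].
  intros n. apply psum_ext. intros k. rewrite ratio_S. reflexivity.
Qed.

Definition F_boundary x j N := - coef N * (1 - q ^ N) * ratio x (j + N).

(* Summation by parts: with [coef_S] and [ratio_qdiff], all interior terms cancel. *)
Lemma psum_F_three_term x N : nonsingular x ->
  (1 - x) * psum (fun k => coef k * ratio x k) N
  + x * q * (b - 1) * psum (fun k => coef k * ratio x (S k)) N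
  - (1 - x * b * q ^ 2) * psum (fun k => coef k * ratio x (S (S k))) N
  = - x * F_boundary x 0 N + x * b * q * F_boundary x 1 N.
Proof.
  intros H. induction N as [|N IH]; [unfold F_boundary; simpl; ring|].
  cbn [psum].
  assert (Hc := coef_S N). assert (Hr2 := ratio_qdiff x N H).
  apply Ceq_minus. apply Ceq_minus in IH, Hc, Hr2.
  unfold F_boundary in *. simpl in *.
  match type of IH with ?A = _ => match type of Hc with ?B = _ => match type of Hr2 with ?D = _ =>
    transitivity (A + coef N * D - (x * ratio x (S N) - x * b * q * ratio x (S (S N))) * B); [ring|]
  end end end.
  rewrite IH, Hc, Hr2. ring.
Qed.

Lemma F_boundary_cv0 x j : Ccv (F_boundary x j) 0.
Proof.
  destruct coef_le as [K HK]. destruct (Ccv_bounded _ _ (ratio_cv1 x)) as [M HM].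
  apply (Ccv_geom_bound _ _ (K * 2 * M) (Cmod q) Hr). intros n.
  unfold F_boundary. rewrite Csub_0_r, !Cmod_mult, Cmod_opp.
  assert (H1q : (Cmod (1 - q ^ n) <= 2)%R).
  { unfold Cminus. eapply Rle_trans; [apply Cmod_triangle|].
    rewrite Cmod_opp, Cmod_1, Cmod_pow. pose proof (pow_le1 (Cmod q) n ltac:(lra)). lra. }
  replace (K * 2 * M * Cmod q ^ n)%R with (K * Cmod q ^ n * 2 * M)%R by ring.
  apply Rmult_le_compat; auto using Rmult_le_pos, Cmod_ge_0.
  apply Rmult_le_compat; auto using Cmod_ge_0.
Qed.

Lemma F_three_term x : nonsingular x ->
  (1 - x) * F x + x * q * (b - 1) * F (x * q) - (1 - x * b * q ^ 2) * F (x * q * q) = 0.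
Proof.
  intros H. apply (Ccv_unique (fun N => - x * F_boundary x 0 N + x * b * q * F_boundary x 1 N)).
  - apply (Ccv_ext _ _ _ (fun N => psum_F_three_term x N H)).
    apply Ccv_minus; [apply Ccv_plus|]; apply Ccv_scal; [apply F_cv | apply F_mul_q_cv|].
    apply (Ccv_ext (psum (fun k => coef k * ratio (x * q) (S k)))); [|apply F_mul_q_cv].
    intros n. apply psum_ext. intros k. rewrite !ratio_S. reflexivity.
  - replace (RtoC 0) with (- x * 0 + x * b * q * 0) by ring.
    apply Ccv_plus; apply Ccv_scal, F_boundary_cv0.
Qed.

Definition F_defect x := (1 - x) * F x - (1 - b * q * x) * F (x * q).

Lemma F_defect_mul_q x : nonsingular x -> F_defect (x * q) = - F_defect x.
Proof.
  intros H. apply Ceq_minus. rewrite <- (F_three_term x H). unfold F_defect. ring.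
Qed.

Lemma Cmod_F_defect_mul_qpow x N : nonsingular x ->
  Cmod (F_defect (x * q ^ N)) = Cmod (F_defect x).
Proof.
  intros H. induction N as [|N IH]; [rewrite Cmult_1_r; reflexivity|].
  replace (x * q ^ S N) with (x * q ^ N * q) by (simpl; ring).
  rewrite F_defect_mul_q, Cmod_opp by (apply nonsingular_mul_qpow, H). exact IH.
Qed.

Lemma F_mul_qpow_cv x : Ccv (fun N => F (x * q ^ N)) (qbin_series q b (- q)).
Proof.
  destruct coef_le as [K HK].
  apply (Ccv_ext (fun N => Clim (psum (fun k => coef k * ratio x (k + N)%nat)))).
  { intros N. apply Clim_ext. intros n. apply psum_ext. intros k. rewrite ratio_add. reflexivity. }
  exact (Clim_psum_shift_cv coef (ratio x) K (Cmod q) Hr HK (ratio_cv1 x)).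
Qed.

Lemma F_defect_eq0 x : nonsingular x -> F_defect x = 0.
Proof.
  intros H. apply Cmod_eq_0, (Cmod_const_of_Ccv0 (fun N => F_defect (x * q ^ N))).
  2: intros N; apply Cmod_F_defect_mul_qpow, H.
  assert (Hx : Ccv (fun N => x * q ^ N) 0).
  { apply (Ccv_geom_bound _ _ (Cmod x) (Cmod q) Hr). intros n.
    rewrite Csub_0_r, Cmod_mult, Cmod_pow. lra. }
  unfold F_defect.
  replace (RtoC 0) with ((1 - 0) * qbin_series q b (- q) - (1 - b * q * 0) * qbin_series q b (- q))
    by ring.
  apply Ccv_minus; apply Ccv_mult.
  - apply Ccv_minus; [apply Ccv_const | exact Hx].
  - apply F_mul_qpow_cv.
  - apply Ccv_minus; [apply Ccv_const | apply Ccv_scal, Hx].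
  - apply (Ccv_ext (fun N => F (x * q ^ (N + 1))));
      [|apply (Ccv_shift (fun N => F (x * q ^ N))), F_mul_qpow_cv].
    intros n. rewrite Nat.add_1_r. simpl. f_equal. ring.
Qed.

Lemma F_closed_form x : nonsingular x ->
  qpoch_inf x q * F x = qpoch_inf (b * q * x) q * qbin_series q b (- q).
Proof.
  intros H. apply (qdifference_solution q (b * q) nonsingular F x _ Hq nonsingular_mul_q).
  - intros y Hy. apply Ceq_minus, F_defect_eq0, Hy.
  - exact H.
  - apply F_mul_qpow_cv.
Qed.

End SeriesF.

Theorem mainTheorem3 (q a b : C) :
  0 < Cmod q -> Cmod q < 1 ->
  (forall j : nat, a * q ^ j <> 1) ->
  is_series
    (fun k : nat =>
       qpoch b q k / qpoch q q k
       * (qpoch_inf (a * b ^ 2 * q ^ (2 + k)) (q ^ 2) / qpoch_inf (a * q ^ k) (q ^ 2))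
       * ((- 1) ^ k * q ^ k))
    (qpoch_inf (- b * q) q * qpoch_inf (a * b * q) q
       / (qpoch_inf (- q) q * qpoch_inf a q)).
Proof.
  intros _ Hq Ha.
  assert (Hval : F q b a = qpoch_inf (- b * q) q * qpoch_inf (a * b * q) q
                           / (qpoch_inf (- q) q * qpoch_inf a q)).
  { assert (Hnz : qpoch_inf a q <> 0) by (apply qpoch_inf_neq0; assumption).
    transitivity (qpoch_inf a q * F q b a / qpoch_inf a q); [field; exact Hnz|].
    rewrite F_closed_form, qbin_series_neg_q by assumption.
    replace (b * q * a) with (a * b * q) by ring.
    field. split; [exact Hnz | apply qpoch_inf_neg_q_neq0, Hq]. }
  rewrite <- Hval. apply is_series_of_Ccv_psum.
  apply (Ccv_ext (psum (fun k => coef q b k * ratio q b a k))); [|apply F_cv, Hq].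
  intros n. apply psum_ext. intros k. unfold coef, ratio, qbin_coef.
  replace (- q) with (- 1 * q) by ring. rewrite Cpow_mult_l. ring.
Qed.
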